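(* Let $G$ be a connected edge-stable equimatchable graph with at least $3$ vertices and let $M$ be a maximal matching of $G$. Then (i) $G$ has no perfect matching; and (ii) for every edge $uv\in M$ there exists a vertex $w$ not saturated by $M$ which is adjacent to $u$ or to $v$.
   Context: All graphs are finite and simple. A graph is equimatchable if all its maximal matchings have the same cardinality; an equimatchable graph $G$ is edge-stable if $G\setminus e$ (delete edge $e$, keep vertices) is equimatchable for every $e\in E(G)$. A matching saturates a vertex if the vertex is an endpoint of one of its edges. *)

From mathcomp Require Import all_boot.
Set Implicit Arguments. Unset Strict Implicit. Unset Printing Implicit Defensive.

Definition simple_graph (T : finType) (g : rel T) : Prop :=
  symmetric g /\ irreflexive g.

Definition is_edge (T : finType) (g : rel T) (e : {set T}) : Prop :=
  exists x y, g x y /\ e = [set x; y].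

Definition matching (T : finType) (g : rel T) (M : {set {set T}}) : Prop :=
  (forall e, e \in M -> is_edge g e) /\
  (forall e f, e \in M -> f \in M -> e != f -> [disjoint e & f]).

Definition maximal_matching (T : finType) (g : rel T) (M : {set {set T}}) : Prop :=
  matching g M /\ (forall M', matching g M' -> M \subset M' -> M' = M).

Definition equimatchable (T : finType) (g : rel T) : Prop :=
  forall M1 M2, maximal_matching g M1 -> maximal_matching g M2 -> #|M1| = #|M2|.

Definition delete_edge (T : finType) (g : rel T) (e : {set T}) : rel T :=
  fun x y => g x y && ([set x; y] != e).

Definition edge_stable (T : finType) (g : rel T) : Prop :=
  equimatchable g /\ (forall e, is_edge g e -> equimatchable (delete_edge g e)).

Definition connected_graph (T : finType) (g : rel T) : Prop :=
  forall x y : T, connect g x y.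

Definition saturates (T : finType) (M : {set {set T}}) (v : T) : Prop :=
  exists2 e, e \in M & v \in e.

Definition perfect_matching (T : finType) (g : rel T) (M : {set {set T}}) : Prop :=
  matching g M /\ forall v : T, saturates M v.

From mathcomp Require Import all_boot.
From Stdlib Require Import Classical.
Set Implicit Arguments. Unset Strict Implicit. Unset Printing Implicit Defensive.

(* Let e = ab be an edge of a maximal matching M. If every neighbour of a or b
   outside e were saturated by M, then M - e would still be maximal in G - e,
   so G - e would have maximal matchings of size |M| - 1. But G is connected
   with at least three vertices, so some edge a'x leaves e; a maximal matching
   of G through a'x avoids e, has size |M| and extends to a maximal matching
   of G - e, contradicting the equimatchability of G - e. A perfect matching
   is maximal and saturates everything, so it cannot exist. *)

Section Matchings.
Variables (T : finType) (g : rel T).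
Implicit Types (M N : {set {set T}}) (e f : {set T}) (a b p q x y z : T).

Lemma matching_subset M N : matching g M -> N \subset M -> matching g N.
Proof.
move=> [Me Md] /subsetP NM; split=> [f /NM|f h /NM fM /NM]; [exact: Me|exact: Md].
Qed.

Lemma matching_set1 x y : g x y -> matching g [set [set x; y]].
Proof.
move=> gxy; split=> [f|f h]; first by rewrite inE => /eqP->; exists x, y.
by rewrite !inE => /eqP-> /eqP->; rewrite eqxx.
Qed.

Lemma matching_setU1 M f : matching g M -> is_edge g f ->
  (forall h, h \in M -> [disjoint f & h]) -> matching g (f |: M).
Proof.
move=> [Me Md] fE fM; split=> [h|h k].
  by rewrite in_setU1 => /orP[/eqP->|/Me].
rewrite !in_setU1 => /orP[/eqP->|hM] /orP[/eqP->|kM]; rewrite ?eqxx //.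
- by move=> _; apply: fM.
- by move=> _; rewrite disjoint_sym; apply: fM.
- exact: Md.
Qed.

Lemma matching_meet_eq M e f x :
  matching g M -> e \in M -> f \in M -> x \in e -> x \in f -> e = f.
Proof.
move=> [_ Md] eM fM xe xf; apply/eqP; apply: contraTT xf => ef.
by rewrite (disjointFr (Md e f eM fM ef) xe).
Qed.

Lemma matching_delete_edge M e :
  matching g M -> e \notin M -> matching (delete_edge g e) M.
Proof.
move=> [Me Md] eM; split=> // f fM; have [p [q [gpq fE]]] := Me f fM.
exists p, q; split=> //; rewrite /delete_edge gpq -fE.
by apply: contraNneq eM => <-.
Qed.

Lemma maximal_matchingP M : maximal_matching g M <->
  matching g M /\
  (forall p q, g p q -> exists2 h, h \in M & (p \in h) || (q \in h)).
Proof.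
split=> [[HM Mmax]|[HM Mcov]].
  split=> // p q gpq; apply: NNPP => Mnc.
  have pq_edge : is_edge g [set p; q] by exists p, q.
  have pq_disj h : h \in M -> [disjoint [set p; q] & h].
    move=> hM; apply/pred0P => y /=; rewrite !inE.
    apply/negP => /andP[/orP[]/eqP-> yh]; apply: Mnc; exists h;
      by rewrite ?yh ?orbT.
  have /setP/(_ [set p; q]) := Mmax _ (matching_setU1 HM pq_edge pq_disj) (subsetUr _ _).
  by rewrite setU11 => pqM; apply: Mnc; exists [set p; q]; rewrite ?set21.
split=> // M' HM' MM'; apply/eqP; rewrite eqEsubset MM' andbT.
apply/subsetP => f fM'; have [p [q [gpq fE]]] := HM'.1 f fM'.
have [h hM /orP pqh] := Mcov p q gpq.
have [y yf yh] : exists2 y, y \in f & y \in h.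
  by case: pqh => [ph|qh]; [exists p|exists q]; rewrite // fE !inE eqxx ?orbT.
by rewrite (matching_meet_eq HM' fM' (subsetP MM' h hM) yf yh).
Qed.

Lemma perfect_matching_maximal M : perfect_matching g M -> maximal_matching g M.
Proof.
move=> [HM Msat]; apply/maximal_matchingP; split=> // p q _.
by have [h hM ph] := Msat p; exists h; rewrite ?ph.
Qed.

Lemma matching_extends N :
  matching g N -> exists2 M, maximal_matching g M & N \subset M.
Proof.
have [k] := ubnP #|~: N|; elim: k N => // k IH N ltNk HN.
case: (classic (maximal_matching g N)) => [Nmax|Nnmax]; first by exists N.
have [M' HM' NM'] : exists2 M', matching g M' & N \proper M'.
  apply: NNPP => Nmax'; apply: Nnmax; split=> // M' HM' NM'.
  case: (eqVneq M' N) => // M'N; case: Nmax'; exists M' => //.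
  by rewrite properEneq eq_sym M'N.
have ltM'k : #|~: M'| < k.
  by rewrite -ltnS (leq_trans _ ltNk) // ltnS proper_card // -properC !setCK.
have [M HM M'M] := IH M' ltM'k HM'.
by exists M => //; apply: subset_trans M'M; apply: proper_sub.
Qed.

Lemma connect_exit (S : {set T}) a z :
  a \in S -> z \notin S -> connect g a z ->
  exists a' x, [/\ a' \in S, x \notin S & g a' x].
Proof.
move=> aS zS /connectP [p]; elim: p a aS => [|y p IH] a aS /=.
  by move=> _ zE; rewrite zE aS in zS.
case/andP=> gay py zE; case: (boolP (y \in S)) => yS; first exact: IH yS py zE.
by exists a, y.
Qed.

Lemma set2_eq_mem p q a b :
  p != q -> p \in [set a; b] -> q \in [set a; b] -> [set p; q] = [set a; b].
Proof.
by move=> + pe qe; move: pe qe; rewrite !inE => /orP[]/eqP-> /orP[]/eqP->;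
   rewrite ?eqxx // setUC.
Qed.

Lemma exists_notin_set2 a b : 2 < #|T| -> exists z, z \notin [set a; b].
Proof.
move=> T3; have /card_gt0P [z] : 0 < #|~: [set a; b]|.
  by rewrite cardsCs setCK subn_gt0 (leq_trans _ T3) // ltnS cards2; case: (a != b).
by rewrite in_setC; exists z.
Qed.

End Matchings.

Section EdgeDeletion.
Variables (T : finType) (g : rel T).
Implicit Types (M : {set {set T}}) (a b : T).
Hypotheses (g_sym : symmetric g) (g_irr : irreflexive g).

Lemma maximal_matching_delete_edge M a b :
  maximal_matching g M -> [set a; b] \in M ->
  (forall p q, p \in [set a; b] -> g p q -> q \notin [set a; b] -> saturates M q) ->
  maximal_matching (delete_edge g [set a; b]) (M :\ [set a; b]).
Proof.
set e := [set a; b]; move=> /maximal_matchingP[HM Mcov] eM Msat.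
apply/maximal_matchingP; split.
  apply: matching_delete_edge; last by rewrite setD11.
  exact: matching_subset HM (subsetDl _ _).
have sat_out x y : x \in e -> g x y -> y \notin e ->
    exists2 h, h \in M :\ e & y \in h.
  move=> xe gxy ye; have [h hM yh] := Msat x y xe gxy ye.
  by exists h; rewrite // in_setD1 hM andbT; apply: contraNneq ye => <-.
move=> p q /andP[gpq pqe]; have [h hM pqh] := Mcov p q gpq.
case: (eqVneq h e) => [he|he]; last by exists h; rewrite // in_setD1 he.
have pq : p != q by apply: contraTneq gpq => ->; rewrite g_irr.
case: (boolP (p \in e)) => pe; case: (boolP (q \in e)) => qe.
- by rewrite (set2_eq_mem pq pe qe) eqxx in pqe.
- by have [h' h'M qh'] := sat_out p q pe gpq qe; exists h'; rewrite // qh' orbT.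
- rewrite g_sym in gpq; have [h' h'M ph'] := sat_out q p qe gpq pe.
  by exists h'; rewrite ?ph'.
- by rewrite he (negbTE pe) (negbTE qe) in pqh.
Qed.

Lemma matching_edge_unsaturated_neighbour M a b :
  connected_graph g -> equimatchable g -> equimatchable (delete_edge g [set a; b]) ->
  2 < #|T| -> maximal_matching g M -> [set a; b] \in M ->
  exists w, ~ saturates M w /\ (g a w \/ g b w).
Proof.
set e := [set a; b]; move=> g_conn g_eqm ge_eqm T3 HM eM; apply: NNPP => Mnsat.
have Msat p q : p \in e -> g p q -> q \notin e -> saturates M q.
  move=> pe gpq _; apply: NNPP => qnsat; apply: Mnsat; exists q; split=> //.
  by move: pe gpq; rewrite !inE => /orP[]/eqP->; auto.
have HMe := maximal_matching_delete_edge HM eM Msat.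
have [z ze] := exists_notin_set2 a b T3.
have [a' [x [a'e xe ga'x]]] := connect_exit (set21 a b) ze (g_conn a z).
have [M' HM' a'xM'] := matching_extends (matching_set1 ga'x).
have a'xM : [set a'; x] \in M' by apply: (subsetP a'xM'); rewrite set11.
have eM' : e \notin M'.
  apply/negP => eM'.
  have ea'x : e = [set a'; x].
    by apply: (matching_meet_eq HM'.1 eM' a'xM a'e); rewrite set21.
  by move: xe; rewrite -/e ea'x set22.
have [M'' HM'' M'M''] := matching_extends (matching_delete_edge HM'.1 eM').
have := subset_leq_card M'M''.
by rewrite (g_eqm _ _ HM' HM) (ge_eqm _ _ HM'' HMe) (cardsD1 e M) eM add1n ltnn.
Qed.

End EdgeDeletion.

Theorem corollary2p2 (T : finType) (g : rel T) (M : {set {set T}}) :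
  simple_graph g -> connected_graph g -> edge_stable g -> 3 <= #|T| ->
  maximal_matching g M ->
  (~ exists P, perfect_matching g P) /\
  (forall u v : T, [set u; v] \in M ->
     exists w : T, ~ saturates M w /\ (g u w \/ g v w)).
Proof.
move=> [g_sym g_irr] g_conn [g_eqm g_stable] T3 HM.
have unsat_nb N u v : maximal_matching g N -> [set u; v] \in N ->
    exists w, ~ saturates N w /\ (g u w \/ g v w).
  move=> HN uvN; apply: matching_edge_unsaturated_neighbour => //.
  exact/g_stable/(HN.1.1 _ uvN).
split=> [[P HP]|u v]; last exact: unsat_nb HM.
have /card_gt0P [z _] : 0 < #|T| by apply: leq_trans T3.
have [h hP zh] := HP.2 z; have [u [v [_ hE]]] := HP.1.1 h hP.
rewrite hE in hP; have [w [wnsat _]] := unsat_nb P u v (perfect_matching_maximal HP) hP.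
exact/wnsat/HP.2.
Qed.
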